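(* Let $C$ be a convex subset of a real topological vector space $X$. Then: (i) $\operatorname{fri} C$ is a convex subset of $C$; (ii) for every $x\in\operatorname{fri} C$ and every $y\in C$, the half-open segment $[x,y)=\{(1-t)x+ty: t\in[0,1)\}$ is contained in $\operatorname{fri} C$; (iii) if $\operatorname{fri} C\neq\emptyset$, then $\overline{C}=\overline{\operatorname{fri} C}$; (iv) $\operatorname{fri}(\operatorname{fri} C)=\operatorname{fri} C$.
   Context: For a convex set $C$, a convex subset $F\subseteq C$ is a face of $C$ if for every $x\in F$ and all $y,z\in C$ with $x\in(y,z)=\{(1-t)y+tz:t\in(0,1)\}$ we have $y,z\in F$; $F_{\min}(x,C)$ is the intersection of all faces of $C$ containing $x\in C$. The face relative interior is $\operatorname{fri} C=\{x\in C: C\subseteq\overline{F_{\min}(x,C)}\}$. *)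

From HB Require Import structures.
From mathcomp Require Import all_boot all_order all_algebra.
From mathcomp Require Import all_classical all_reals all_analysis.
Set Implicit Arguments. Unset Strict Implicit. Unset Printing Implicit Defensive.
Import Order.TTheory GRing.Theory Num.Theory.
Local Open Scope classical_set_scope.
Local Open Scope ring_scope.

Section Faces.
Context {R : realType} {X : topologicalLmodType R}.

Definition convex_set_tvs (C : set X) : Prop :=
  forall y z (t : R), C y -> C z -> 0 <= t <= 1 -> C ((1 - t) *: y + t *: z).

Definition in_open_seg (x y z : X) : Prop :=
  exists t : R, 0 < t < 1 /\ x = (1 - t) *: y + t *: z.

Definition is_face (C F : set X) : Prop :=
  [/\ convex_set_tvs F, F `<=` C &
      forall x y z, F x -> C y -> C z -> in_open_seg x y z -> F y /\ F z].

Definition Fmin (x : X) (C : set X) : set X :=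
  [set z | forall F, is_face C F -> F x -> F z].

Definition fri (C : set X) : set X :=
  [set x | C x /\ C `<=` closure (Fmin x C)].

End Faces.

From HB Require Import structures.
From mathcomp Require Import all_boot all_order all_algebra.
From mathcomp Require Import all_classical all_reals all_analysis.
From mathcomp Require Import lra.
Import Order.TTheory GRing.Theory Num.Theory.
Local Open Scope classical_set_scope.
Local Open Scope ring_scope.

(* (i) and (ii) come from the monotonicity of F_min along open segments: if x
   lies in (y, z) then every face containing x contains y, so
   F_min(y, C) is contained in F_min(x, C).  (iii) follows from (ii), since
   every point of C is the limit of a half-open segment [x, y) lying in fri C.
   For (iv), a face F of fri C containing x in fri C is pulled back to the face
   {w in C | (x + w)/2 in F} of C; hence F_min(x, C) meets fri C inside
   F_min(x, fri C), and by (ii) F_min(x, C) lies in the closure of that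
   intersection. *)

Section FaceRelativeInterior.
Context {R : realType} {X : topologicalLmodType R}.
Implicit Types (C F S : set X) (x y z : X).

Lemma closure_closure S : closure (closure S) = closure S.
Proof. by rewrite -(closure_id _).1 //; exact: closed_closure. Qed.

Lemma segment_continuous x z : continuous (fun t : R^o => (1 - t) *: x + t *: z).
Proof.
move=> t.
apply: (@continuous_comp _ _ _ (fun t : R^o => ((1 - t) *: x, t *: z))
  (fun p : X * X => p.1 + p.2)); last exact: add_continuous.
apply: (@cvg_pair _ _ _ _ (nbhs ((1 - t) *: x)) (nbhs (t *: z))).
- apply: (@continuous_comp _ _ _ (fun t : R^o => ((1 - t : R^o), x))
    (fun p : R^o * X => p.1 *: p.2)); last exact: scale_continuous.
  apply: (@cvg_pair _ _ _ _ (nbhs (1 - t : R^o)) (nbhs x)); last exact: cvg_cst.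
  by apply: cvgB; [exact: cvg_cst | exact: cvg_id].
- apply: (@continuous_comp _ _ _ (fun t : R^o => (t, z))
    (fun p : R^o * X => p.1 *: p.2)); last exact: scale_continuous.
  apply: (@cvg_pair _ _ _ _ (nbhs (t : R^o)) (nbhs z)); last exact: cvg_cst.
  exact: cvg_id.
Qed.

Lemma closure_half_open_segment S x z :
  (forall t : R, 0 <= t < 1 -> S ((1 - t) *: x + t *: z)) -> closure S z.
Proof.
move=> segS N Nz.
have : nbhs (1 : R^o) ((fun t : R^o => (1 - t) *: x + t *: z) @^-1` N).
  by apply: segment_continuous => /=; rewrite subrr scale0r add0r scale1r.
move=> /nbhs_ballP[e /= e0 ballN].
pose d := Num.min e 1 / 2.
have d0 : 0 < d by rewrite divr_gt0 // lt_min e0 ltr01.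
have : d < Num.min e 1.
  by rewrite /d ltr_pdivrMr // ltr_pMr ?lt_min ?e0 ?ltr01 // ltr1n.
rewrite lt_min => /andP[de d1].
exists ((1 - (1 - d)) *: x + (1 - d) *: z); split.
  by apply: segS; rewrite subr_ge0 (ltW d1) /= ltrBlDr ltrDl.
by apply: ballN; rewrite /ball /= opprB addrC subrK ger0_norm // ltW.
Qed.

Lemma face_refl C : convex_set_tvs C -> is_face C C.
Proof. by move=> convC; split. Qed.

Lemma convex_Fmin x C : convex_set_tvs (Fmin x C).
Proof.
move=> y z t Fy Fz t01 F faceF Fx.
by case: (faceF) => convF _ _; apply: convF => //; [exact: Fy | exact: Fz].
Qed.

Lemma Fmin_refl x C : Fmin x C x.
Proof. by move=> F _. Qed.

Lemma Fmin_sub x C : convex_set_tvs C -> C x -> Fmin x C `<=` C.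
Proof. by move=> convC Cx z; apply; first exact: face_refl. Qed.

Lemma Fmin_open_segment x y z C : C y -> C z -> in_open_seg x y z ->
  Fmin y C `<=` Fmin x C.
Proof.
move=> Cy Cz xyz w Fyw F faceF Fx; apply: Fyw => //.
by case: faceF => _ _ /(_ x y z Fx Cy Cz xyz)[].
Qed.

Lemma fri_sub C : fri C `<=` C.
Proof. by move=> x []. Qed.

Lemma fri_segment C x y (t : R) : convex_set_tvs C ->
  fri C x -> C y -> 0 <= t < 1 -> fri C ((1 - t) *: x + t *: y).
Proof.
move=> convC [Cx Cclosure] Cy /andP[t0 t1].
have [->|tn0] := eqVneq t 0; first by rewrite subr0 scale1r scale0r addr0.
split; first by apply: convC => //; rewrite t0 ltW.
move=> w /Cclosure; apply: closureS; apply: Fmin_open_segment Cx Cy _.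
by exists t; rewrite lt0r tn0 t0.
Qed.

Lemma convex_fri C : convex_set_tvs C -> convex_set_tvs (fri C).
Proof.
move=> convC x y t frix friy /andP[t0 t1].
have [->|tn1] := eqVneq t 1; first by rewrite subrr scale0r add0r scale1r.
by apply: fri_segment => //; [exact: fri_sub | rewrite t0 lt_neqAle tn1].
Qed.

Lemma closure_fri C : convex_set_tvs C -> fri C !=set0 ->
  closure C = closure (fri C).
Proof.
move=> convC [x frix]; apply/seteqP; split; last exact: closureS (fri_sub C).
rewrite -[X in _ `<=` X]closure_closure; apply: closureS => y Cy.
by apply: (closure_half_open_segment _ x) => t; exact: fri_segment.
Qed.

Definition homothety x (h : R) y : X := (1 - h) *: x + h *: y.

Lemma homothety_comb x (h t : R) y z :
  homothety x h ((1 - t) *: y + t *: z) =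
  (1 - t) *: homothety x h y + t *: homothety x h z.
Proof.
rewrite /homothety !scalerDr !scalerA addrACA -scalerDl -mulrDl subrK mul1r.
by rewrite (mulrC h) (mulrC h) addrA.
Qed.

Lemma homothety_id x (h : R) : homothety x h x = x.
Proof. by rewrite /homothety -scalerDl subrK scale1r. Qed.

(* A face F of fri C pulls back along the homothety centred at x in fri C,
   since this homothety maps C into fri C by (ii). *)
Lemma face_homothety_preimage {C F x} {h : R} : convex_set_tvs C ->
  is_face (fri C) F -> fri C x -> 0 <= h < 1 ->
  is_face C [set w | C w /\ F (homothety x h w)].
Proof.
move=> convC [convF _ extremeF] frix h01.
have friH y : C y -> fri C (homothety x h y) by move=> Cy; exact: fri_segment.
split.
- move=> y z t [Cy Fy] [Cz Fz] t01; split; first exact: convC.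
  by rewrite homothety_comb; exact: convF.
- by move=> w [].
- move=> p y z [Cp Fp] Cy Cz [t [t01 pE]].
  have [|Fy Fz] := extremeF _ _ _ Fp (friH y Cy) (friH z Cz).
    by exists t; rewrite pE homothety_comb.
  by split; split.
Qed.

Lemma Fmin_fri C x : convex_set_tvs C -> fri C x ->
  Fmin x C `&` fri C `<=` Fmin x (fri C).
Proof.
move=> convC frix z [Fz friz] F faceF Fx.
have h01 : 0 <= (2^-1 : R) < 1 by lra.
have Fxx : C x /\ F (homothety x 2^-1 x).
  by rewrite homothety_id; split => //; exact: fri_sub.
have [_ Fhz] := Fz _ (face_homothety_preimage convC faceF frix h01) Fxx.
have [_ _ extremeF] := faceF.
have [|//] := extremeF _ x z Fhz frix friz.
by exists 2^-1; split => //; lra.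
Qed.

Lemma Fmin_sub_closure_Fmin_fri C x : convex_set_tvs C -> fri C x ->
  Fmin x C `<=` closure (Fmin x (fri C)).
Proof.
move=> convC frix z Fz; apply: (closureS (Fmin_fri _ _ convC frix)).
apply: (closure_half_open_segment _ x) => t /andP[t0 t1]; split.
  by apply: convex_Fmin; [exact: Fmin_refl | exact: Fz | rewrite t0 ltW].
apply: fri_segment; rewrite ?t0 //.
exact: Fmin_sub convC (fri_sub _ _ frix) _ Fz.
Qed.

Lemma fri_fri C : convex_set_tvs C -> fri (fri C) = fri C.
Proof.
move=> convC; apply/seteqP; split; first exact: fri_sub.
move=> x frix; split=> //.
have := closureS (Fmin_sub_closure_Fmin_fri _ _ convC frix).
by rewrite closure_closure => sub y /fri_sub /frix.2 /sub.
Qed.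

End FaceRelativeInterior.

Theorem proposition4p1 (R : realType) (X : topologicalLmodType R) (C : set X) :
  convex_set_tvs C ->
  [/\ convex_set_tvs (fri C) /\ fri C `<=` C,
      (forall (x y : X) (t : R), fri C x -> C y -> 0 <= t < 1 ->
         fri C ((1 - t) *: x + t *: y)),
      (fri C !=set0 -> closure C = closure (fri C)) &
      fri (fri C) = fri C].
Proof.
move=> convC; split.
- by split; [exact: convex_fri | exact: fri_sub].
- by move=> x y t; exact: fri_segment.
- exact: closure_fri.
- exact: fri_fri.
Qed.
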